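(* For $1\le q\le\tilde q\le\mathsf n$, let $\widetilde X^{\tilde q}_{q:\mathsf n}$ be such that $\widetilde X^{\tilde q}_{\tilde q}\in\mathbb X$ is arbitrary and $\widetilde X^{\tilde q}_k=X_k$ for all $q\le k\le\mathsf n$ with $k\ne\tilde q$. Then for any $1\le q\le\tilde q\le\mathsf n$, \[\big|\log\mathbb P_{\pi_V}(X_q\mid X_{q+1:\mathsf n})-\log\mathbb P_{\pi_V}(\widetilde X^{\tilde q}_q\mid\widetilde X^{\tilde q}_{q+1:\mathsf n})\big|\le\nu_q^{-1}\prod_{k=q+1}^{\tilde q-1}(1-\nu_k)\] (empty products equal $1$).
   Context: Let $\mathsf n\ge1$, $\pi_V$ a probability on a measurable space $\mathbb V$, $\mathbb X$ a discrete set, $K_i:\mathbb X\times\mathbb V^2\to[0,\infty)$ with each $K_i(\cdot,v,w)$ a probability on $\mathbb X$. $\mathbb P_{\pi_V}$ is the law of $(V_{1:\mathsf n+1},X_{1:\mathsf n})$ with $V_i$ i.i.d. $\pi_V$ and, given $V$, $X_i$ independent with $\mathbb P(X_i=x\mid V)=K_i(x,V_i,V_{i+1})$; $\mathbb P_{\pi_V}(x_q\mid x_{q+1:\mathsf n})$ denotes the conditional probability that $X_q=x_q$ given $X_{q+1:\mathsf n}=x_{q+1:\mathsf n}$. Assumption H2: there exist $\nu_i>0$ with $\nu_i\le K_i(x,v,w)\le1$ for all $x,i,v,w$. *)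

From HB Require Import structures.
From mathcomp Require Import all_boot all_order all_algebra.
From mathcomp Require Import all_classical all_reals all_analysis.
Set Implicit Arguments. Unset Strict Implicit. Unset Printing Implicit Defensive.
Import Order.TTheory GRing.Theory Num.Theory.
Local Open Scope classical_set_scope.
Local Open Scope ring_scope.

(* Indices are 1-based as in the paper: X_1..X_n, V_1..V_{n+1};
   index 0 of the nat-indexed families is unused. *)

Section HMM.
Context {d : measure_display} {V : measurableType d} {R : realType}.

Definition upd {T : Type} (v : nat -> T) (k : nat) (w : T) : nat -> T :=
  fun j => if j == k then w else v j.

(* iterated integral of f with respect to pi in the coordinates 1..k
   (coordinate k outermost) : the expectation under the product law of
   V_1..V_k i.i.d. pi (by Tonelli) *)
Fixpoint iint (pi : probability V R) (k : nat) (f : (nat -> V) -> R)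
  (v : nat -> V) : R :=
  match k with
  | 0 => f v
  | k'.+1 => Rintegral pi setT (fun w => iint pi k' f (upd v k'.+1 w))
  end.

(* P_{pi_V}(X_{q:n} = x_{q:n}) = E[ prod_{i=q}^n K_i(x_i, V_i, V_{i+1}) ],
   V_1..V_{n+1} i.i.d. pi (empty product = 1 when q = n+1) *)
Definition probX {X : Type} (pi : probability V R) (K : nat -> X -> V -> V -> R)
  (n q : nat) (x : nat -> X) : R :=
  iint pi n.+1
    (fun v => \prod_(q <= i < n.+1) K i (x i) (v i) (v i.+1)) (fun _ => point).

Definition condP {X : Type} (pi : probability V R) (K : nat -> X -> V -> V -> R)
  (n q : nat) (x : nat -> X) : R :=
  probX pi K n q x / probX pi K n q.+1 x.

End HMM.

From HB Require Import structures.
From mathcomp Require Import all_boot all_order all_algebra.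
From mathcomp Require Import all_classical all_reals all_analysis.
From mathcomp Require Import measurable_realfun ring lra zify.
Import Order.TTheory GRing.Theory Num.Theory.
Local Open Scope classical_set_scope.
Local Open Scope ring_scope.

(* Integrating out V_1, ..., V_{n+1} one coordinate at a time turns
   P(X_{q:n} = x_{q:n}) into the integral of the unnormalised forward filter
   h |-> (w |-> E[h(V) K_i(x_i, V, w)]) applied for i = q, ..., n to the
   constant 1.  Hence P(x_q | x_{q+1:n}) is a ratio of integrals of the same
   positive forward maps applied to g = E[K_q(x_q, V, .)] and to 1, and
   nu_q <= g <= 1.  Positive maps preserve pointwise bounds a f <= h <= b f,
   and the Doeblin minorization K_i >= nu_i shrinks the width b - a of such a
   bracket by the factor 1 - nu_i.  The two observation sequences differ
   only at time qt, so the bracket reached after the common steps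
   q+1, ..., qt-1 survives the remaining steps for both of them: both
   conditional probabilities lie in one interval [a, b] with a >= nu_q and
   b - a <= (1 - nu_q) prod (1 - nu_k), and |ln r - ln r'| <= (b - a) / a. *)

Section Forward.
Context {d : measure_display} {V : measurableType d} {R : realType}.
Variable pi : probability V R.

Lemma Rintegral_cst_probability (c : R) : \int[pi]_u c = c.
Proof.
by rewrite Rintegral_cst// -[RHS]mulr1 (congr1 fine (probability_setT pi)).
Qed.

Definition bmfun (f : V -> R) :=
  measurable_fun setT f /\ exists M, forall v, `|f v| <= M.

Definition unit_mfun (h : V -> R) :=
  measurable_fun setT h /\ forall v, 0 <= h v <= 1.

Definition ratio_between (h f : V -> R) (a b : R) :=
  forall u, a * f u <= h u <= b * f u.

Lemma bmfun_integrable {f} : bmfun f -> pi.-integrable setT (EFin \o f).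
Proof.
move=> [mf [M fM]]; apply: measurable_bounded_integrable => //.
  exact: le_lt_trans (probability_le1 pi measurableT) (ltry 1).
rewrite /bounded_near; near=> N => v _ /=; apply: le_trans (fM v) _.
by near: N; apply: nbhs_pinfty_ge; exact: num_real.
Unshelve. all: end_near. Qed.

Lemma bmfun_cst c : bmfun (fun _ => c).
Proof. by split=> //; exists `|c|. Qed.

Lemma bmfunB {f g} : bmfun f -> bmfun g -> bmfun (fun u => f u - g u).
Proof.
move=> [mf [M fM]] [mg [N gN]]; split; first exact: measurable_funB.
by exists (M + N) => v; apply: le_trans (ler_normB _ _) (lerD _ _).
Qed.

Lemma bmfunM {f g} : bmfun f -> bmfun g -> bmfun (fun u => f u * g u).
Proof.
move=> [mf [M fM]] [mg [N gN]]; split; first exact: measurable_funM.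
by exists (M * N) => v; rewrite normrM ler_pM.
Qed.

Lemma bmfunZ c {f} : bmfun f -> bmfun (fun u => c * f u).
Proof. exact: bmfunM (bmfun_cst c). Qed.

Lemma unit_mfun_bmfun {h} : unit_mfun h -> bmfun h.
Proof.
move=> [mh h01]; split=> //; exists 1 => v.
by have /andP[h0 h1] := h01 v; rewrite ger0_norm.
Qed.

Lemma unit_mfun1 : unit_mfun (fun _ => 1).
Proof. by split=> // v; rewrite ler01 lexx. Qed.

Lemma Rintegral_ratio_between {h f a b} : bmfun h -> bmfun f ->
  ratio_between h f a b ->
  a * \int[pi]_u f u <= \int[pi]_u h u <= b * \int[pi]_u f u.
Proof.
move=> bh bf hf; have iZ c := bmfun_integrable (bmfunZ c bf).
have [ih if_] := (bmfun_integrable bh, bmfun_integrable bf).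
rewrite -!RintegralZl//; apply/andP; split; apply: le_Rintegral => // u _.
  by case/andP: (hf u).
by case/andP: (hf u).
Qed.

Lemma Rintegral_ge_cst {h c} : bmfun h -> (forall u, c <= h u) ->
  c <= \int[pi]_u h u.
Proof.
move=> bh ch; rewrite -[leLHS]Rintegral_cst_probability.
by apply: le_Rintegral => //; apply: bmfun_integrable => //; exact: bmfun_cst.
Qed.

Lemma Rintegral_linear h f c : bmfun h -> bmfun f ->
  \int[pi]_u (h u - c * f u) = \int[pi]_u h u - c * \int[pi]_u f u.
Proof.
move=> bh bf; rewrite RintegralB ?RintegralZl//; apply: bmfun_integrable => //.
exact: bmfunZ.
Qed.

Definition minorized (k : V -> V -> R) (nu : R) :=
  [/\ measurable_fun setT (fun p : V * V => k p.1 p.2), 0 <= nu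
    & forall u w, nu <= k u w <= 1].

Definition forward (k : V -> V -> R) (h : V -> R) (w : V) : R :=
  \int[pi]_u (h u * k u w).

Section Minorized.
Context {k : V -> V -> R} {nu : R} (hk : minorized k nu).

Lemma minorized_ge0 u w : 0 <= k u w.
Proof. by case: hk => _ nu0 /(_ u w)/andP[+ _]; exact: le_trans. Qed.

Lemma minorized_le1 : nu <= 1.
Proof. by case: hk => _ _ /(_ point point)/andP[]; exact: le_trans. Qed.

Lemma bmfun_kernel w : bmfun (fun u => k u w).
Proof.
case: hk => mk _ k01; split.
  exact: (measurableT_comp mk (pair2_measurable w)).
by exists 1 => u; rewrite ger0_norm ?minorized_ge0//; case/andP: (k01 u w).
Qed.

Lemma bmfun_forward_integrand {h} w : bmfun h -> bmfun (fun u => h u * k u w).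
Proof. by move=> bh; exact: bmfunM bh (bmfun_kernel w). Qed.

Lemma forward_unit {h} : unit_mfun h -> unit_mfun (forward k h).
Proof.
move=> uh; have [[mh h01] [mk _ _]] := (uh, hk); split.
  rewrite (_ : forward k h =
    fine \o fubini_G pi (EFin \o (fun p : V * V => h p.1 * k p.1 p.2)))//.
  apply: measurableT_comp; first exact: fine_measurable.
  apply: measurable_fun_fubini_tonelli_G.
    apply/measurable_EFinP; apply: measurable_funM => //.
    exact: measurableT_comp.
  by move=> [u w] /=; rewrite lee_fin mulr_ge0 ?minorized_ge0//; case/andP: (h01 u).
move=> w; apply/andP; split.
  by apply: Rintegral_ge0 => u _; rewrite mulr_ge0 ?minorized_ge0//; case/andP: (h01 u).
rewrite -[leRHS]Rintegral_cst_probability.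
apply: le_Rintegral => //.
- exact/bmfun_integrable/bmfun_forward_integrand/unit_mfun_bmfun.
- exact/bmfun_integrable/bmfun_cst.
- move=> u _; have /andP[h0 h1] := h01 u; case: hk => _ _ /(_ u w)/andP[_ k1].
  by rewrite mulr_ile1 ?minorized_ge0.
Qed.

Lemma forward_ge_cst {h} c w : bmfun h -> 0 <= c -> (forall u, c <= h u) ->
  c * nu <= forward k h w.
Proof.
move=> bh c0 ch; rewrite -[leLHS]Rintegral_cst_probability.
apply: le_Rintegral => //.
- exact/bmfun_integrable/bmfun_cst.
- exact/bmfun_integrable/bmfun_forward_integrand.
- by move=> u _; case: hk => _ nu0 /(_ u w)/andP[k1 _]; rewrite ler_pM.
Qed.

Lemma forward_le_Rintegral {h} w : bmfun h -> (forall u, 0 <= h u) ->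
  forward k h w <= \int[pi]_u h u.
Proof.
move=> bh h0; apply: le_Rintegral => //.
- exact/bmfun_integrable/bmfun_forward_integrand.
- exact: bmfun_integrable.
- by move=> u _; case: hk => _ _ /(_ u w)/andP[_ k1]; rewrite ler_piMr.
Qed.

Lemma forward_sub_ge {h f} c w : bmfun h -> bmfun f -> (forall u, c * f u <= h u) ->
  nu * (\int[pi]_u h u - c * \int[pi]_u f u) <= forward k h w - c * forward k f w.
Proof.
move=> bh bf cfh.
have [bhk bfk] := (bmfun_forward_integrand w bh, bmfun_forward_integrand w bf).
rewrite -!Rintegral_linear// -RintegralZl//; last exact/bmfun_integrable/bmfunB/bmfunZ.
apply: le_Rintegral => //.
- exact/bmfun_integrable/bmfunZ/bmfunB/bmfunZ.
- exact/bmfun_integrable/(bmfunB bhk (bmfunZ c bfk)).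
- move=> u _; case: hk => _ _ /(_ u w)/andP[nuk _].
  have g0 : 0 <= h u - c * f u by rewrite subr_ge0.
  have k0 : 0 <= k u w - nu by rewrite subr_ge0.
  nra.
Qed.

Lemma forwardZ c {f} w : bmfun f ->
  forward k (fun u => c * f u) w = c * forward k f w.
Proof.
move=> bf; rewrite /forward -RintegralZl//; last first.
  exact/bmfun_integrable/bmfun_forward_integrand.
by apply: eq_Rintegral => u _; rewrite mulrA.
Qed.

Lemma forward_sub_le {h f} c w : bmfun h -> bmfun f -> (forall u, h u <= c * f u) ->
  forward k h w - c * forward k f w <= nu * (\int[pi]_u h u - c * \int[pi]_u f u).
Proof.
move=> bh bf hcf; have hcf1 u : 1 * h u <= c * f u by rewrite mul1r.
have := forward_sub_ge 1 w (bmfunZ c bf) bh hcf1.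
rewrite forwardZ// RintegralZl//; last exact: bmfun_integrable.
by rewrite !mul1r; lra.
Qed.

Lemma forward_ratio_between {h f a b} : bmfun h -> bmfun f ->
  ratio_between h f a b -> ratio_between (forward k h) (forward k f) a b.
Proof.
move=> bh bf hf w; have /andP[aFH HbF] := Rintegral_ratio_between bh bf hf.
have nu0 : 0 <= nu by case: hk.
have lo := forward_sub_ge a w bh bf (fun u => proj1 (andP (hf u))).
have hi := forward_sub_le b w bh bf (fun u => proj2 (andP (hf u))).
by apply/andP; split; nra.
Qed.

Lemma forward_contraction {h f a b} : unit_mfun h -> unit_mfun f -> a <= b ->
  ratio_between h f a b ->
  exists a' b', [/\ a <= a', a' <= b', b' - a' <= (1 - nu) * (b - a)
    & ratio_between (forward k h) (forward k f) a' b'].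
Proof.
move=> uh uf ab hf; have [bh bf] := (unit_mfun_bmfun uh, unit_mfun_bmfun uf).
have nu0 : 0 <= nu by case: hk.
have nu1 := minorized_le1.
have f0 u : 0 <= f u by case/andP: (uf.2 u).
set F := \int[pi]_u f u; set H := \int[pi]_u h u.
have /andP[aFH HbF] : a * F <= H <= b * F := Rintegral_ratio_between bh bf hf.
have lo w : nu * (H - a * F) <= forward k h w - a * forward k f w :=
  forward_sub_ge a w bh bf (fun u => proj1 (andP (hf u))).
have hi w : forward k h w - b * forward k f w <= nu * (H - b * F) :=
  forward_sub_le b w bh bf (fun u => proj2 (andP (hf u))).
have fwF w : forward k f w <= F := forward_le_Rintegral w bf f0.
have fw0 w : 0 <= forward k f w by case/andP: ((forward_unit uf).2 w).
have [F0 | F_neq0] := eqVneq F 0.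
  have fw_eq0 w : forward k f w = 0 by apply/le_anti; rewrite fw0 -F0 fwF.
  exists a, a; split => //; first by rewrite subrr mulr_ge0 ?subr_ge0.
  by move=> w; have := forward_ratio_between bh bf hf w; rewrite !fw_eq0 !mulr0.
have F_gt0 : 0 < F by rewrite lt_def F_neq0 Rintegral_ge0.
(* By minorization every w inherits at least nu times the integrated gaps
   H - a F and b F - H, which together make up nu (b - a) F. *)
set r := nu * (H - a * F) / F; set s := nu * (b * F - H) / F.
have rF : r * F = nu * (H - a * F) by rewrite divfK.
have sF : s * F = nu * (b * F - H) by rewrite divfK.
have r0 : 0 <= r by rewrite divr_ge0 ?mulr_ge0 ?subr_ge0// ltW.
have s0 : 0 <= s by rewrite divr_ge0 ?mulr_ge0 ?subr_ge0// ltW.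
have rs : r + s = nu * (b - a) by apply: (mulIf F_neq0); rewrite mulrDl rF sF; ring.
have gap_ge0 : 0 <= (1 - nu) * (b - a) by rewrite mulr_ge0 ?subr_ge0.
exists (a + r), (b - s); split; [by rewrite lerDl | lra | lra |].
move=> w; have [fw0w fwFw] := (fw0 w, fwF w); have [low hiw] := (lo w, hi w).
by apply/andP; split; nra.
Qed.

End Minorized.
End Forward.

Lemma norm_lnB_le {R : realType} {a b r s : R} : 0 < a ->
  a <= r <= b -> a <= s <= b -> `|ln r - ln s| <= (b - a) / a.
Proof.
wlog sr : r s / s <= r.
  move=> W a0 hr hs; have [sr|/ltW rs] := leP s r; first exact: W.
  by rewrite distrC; exact: W.
move=> a0 /andP[ar rb] /andP[a_s sb].
have [s0 r0] : 0 < s /\ 0 < r by split; apply: lt_le_trans a0 _.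
have lnsr : ln s <= ln r by rewrite ler_ln ?posrE.
rewrite ger0_norm ?subr_ge0// -ln_div ?posrE//.
have rs0 : 0 <= (r - s) / s by rewrite divr_ge0 ?subr_ge0// ltW.
rewrite (_ : r / s = 1 + (r - s) / s); last by field; rewrite gt_eqF.
apply: le_trans (le_ln1Dx _) _; first lra.
apply: ler_pM; [by rewrite subr_ge0 | by rewrite invr_ge0 ltW | lra |].
by rewrite lef_pV2 ?posrE.
Qed.

Lemma upd_same {T : Type} (v : nat -> T) j w : upd v j w j = w.
Proof. by rewrite /upd eqxx. Qed.

Lemma upd_other {T : Type} (v : nat -> T) j w i : i != j -> upd v j w i = v i.
Proof. by rewrite /upd => /negbTE ->. Qed.

Lemma prod_upd_below {T : Type} {R : pzSemiRingType} (F : nat -> T -> T -> R)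
    (v : nat -> T) j w a b : (j < a)%N ->
  \prod_(a <= i < b) F i (upd v j w i) (upd v j w i.+1) =
  \prod_(a <= i < b) F i (v i) (v i.+1).
Proof.
move=> ja; apply: eq_big_nat => i /andP[ai _].
by rewrite !upd_other//; apply/eqP; lia.
Qed.

Section HiddenMarkov.
Context {d : measure_display} {V : measurableType d} {R : realType}.
Context (pi : probability V R) {X : Type} {n : nat}.
Context {K : nat -> X -> V -> V -> R} {nu : nat -> R}.
Hypothesis K_meas : forall i (x : X), (1 <= i <= n)%N ->
  measurable_fun setT (fun vw : V * V => K i x vw.1 vw.2).
Hypothesis nu_gt0 : forall i, (1 <= i <= n)%N -> 0 < nu i.
Hypothesis K_bounds : forall i x v w, (1 <= i <= n)%N -> nu i <= K i x v w <= 1.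

Local Notation forward := (forward pi).

Lemma K_minorized {i z} : (1 <= i <= n)%N -> minorized (K i z) (nu i).
Proof.
by move=> hi; split=> [||u w]; [exact: K_meas | exact/ltW/nu_gt0 | exact: K_bounds].
Qed.

Lemma iint_indep k f v :
  (forall v j w, (1 <= j <= k)%N -> f (upd v j w) = f v) -> iint pi k f v = f v.
Proof.
elim: k v => [//|k IH] v hf /=.
rewrite -[RHS](Rintegral_cst_probability pi); apply: eq_Rintegral => w _.
by rewrite IH => [|u j u' hj]; rewrite hf//; lia.
Qed.

Fixpoint forward_from (x : nat -> X) (s m : nat) (h : V -> R) : V -> R :=
  if m is m'.+1 then forward (K (s + m')%N (x (s + m')%N)) (forward_from x s m' h)
  else h.

Lemma forward_fromS x s m h :
  forward_from x s m.+1 h = forward_from x s.+1 m (forward (K s (x s)) h).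
Proof.
elim: m => [|m IH] /=; first by rewrite addn0.
by rewrite -IH /= addSnnS.
Qed.

Lemma forward_from_add x s m1 m2 h :
  forward_from x s (m1 + m2)%N h = forward_from x (s + m1)%N m2 (forward_from x s m1 h).
Proof. by elim: m2 => [|m2 IH]; rewrite ?addn0// addnS /= IH addnA. Qed.

Lemma eq_forward_from x y s m h : (forall i, (s <= i < s + m)%N -> x i = y i) ->
  forward_from x s m h = forward_from y s m h.
Proof.
elim: m => [//|m IH] /= xy.
by rewrite IH => [|i hi]; rewrite xy//; lia.
Qed.

Lemma forward_from_unit x s m h : (0 < s)%N -> (s + m <= n.+1)%N ->
  unit_mfun h -> unit_mfun (forward_from x s m h).
Proof.
move=> s0; elim: m => [//|m IH] sm uh /=.
by apply: (forward_unit pi (K_minorized _)) (IH _ uh); lia.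
Qed.

Lemma forward_from_ratio_between x s m h f a b : (0 < s)%N -> (s + m <= n.+1)%N ->
  unit_mfun h -> unit_mfun f -> ratio_between h f a b ->
  ratio_between (forward_from x s m h) (forward_from x s m f) a b.
Proof.
move=> s0; elim: m => [//|m IH] sm uh uf hf /=.
have hk : minorized (K (s + m)%N (x (s + m)%N)) (nu (s + m)%N) by apply: K_minorized; lia.
have um g : unit_mfun g -> unit_mfun (forward_from x s m g).
  by apply: forward_from_unit; lia.
apply: (forward_ratio_between pi hk); try exact/unit_mfun_bmfun/um.
by apply: IH => //; lia.
Qed.

Lemma forward_from_contraction x s m h f a b : (0 < s)%N -> (s + m <= n.+1)%N ->
  unit_mfun h -> unit_mfun f -> a <= b -> ratio_between h f a b ->
  exists a' b', [/\ a <= a', a' <= b',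
    b' - a' <= (b - a) * \prod_(s <= i < s + m) (1 - nu i)
    & ratio_between (forward_from x s m h) (forward_from x s m f) a' b'].
Proof.
move=> s0; elim: m => [|m IH] sm uh uf ab hf.
  by exists a, b; rewrite addn0 big_geq// mulr1.
have [a1 [b1 [aa1 ab1 ba1 hf1]]] := IH ltac:(lia) uh uf ab hf.
have hk : minorized (K (s + m)%N (x (s + m)%N)) (nu (s + m)%N) by apply: K_minorized; lia.
have um g : unit_mfun g -> unit_mfun (forward_from x s m g).
  by apply: forward_from_unit; lia.
have [a2 [b2 [aa2 ab2 ba2 hf2]]] :=
  forward_contraction pi hk (um _ uh) (um _ uf) ab1 hf1.
exists a2, b2; split => //; first exact: le_trans aa2.
rewrite addnS big_nat_recr /= ?leq_addr// mulrA mulrC.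
apply: le_trans ba2 _; apply: ler_wpM2l => //.
by rewrite subr_ge0 (minorized_le1 hk).
Qed.

Lemma forward_from1_ge x s m w : (0 < s)%N -> (s + m <= n.+1)%N ->
  \prod_(s <= i < s + m) nu i <= forward_from x s m (fun _ => 1) w.
Proof.
move=> s0; elim: m w => [|m IH] w sm; first by rewrite addn0 big_geq.
have hk : minorized (K (s + m)%N (x (s + m)%N)) (nu (s + m)%N) by apply: K_minorized; lia.
rewrite addnS big_nat_recr ?leq_addr//=.
apply: (forward_ge_cst pi hk); last by move=> u; apply: IH; lia.
- by apply/unit_mfun_bmfun/forward_from_unit/unit_mfun1 => //; lia.
- rewrite big_seq prodr_ge0// => i; rewrite mem_index_iota => hi.
  by apply/ltW/nu_gt0; lia.
Qed.

Lemma iint_forward_from x {q m} v : (0 < q)%N -> (q + m <= n.+1)%N ->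
  iint pi (q.-1 + m) (fun v => \prod_(q <= i < n.+1) K i (x i) (v i) (v i.+1)) v =
  forward_from x q m (fun _ => 1) (v (q + m)%N) *
  \prod_(q + m <= i < n.+1) K i (x i) (v i) (v i.+1).
Proof.
move=> q0; elim: m v => [|m IH] v qm.
  rewrite !addn0 mul1r iint_indep// => u j w hj.
  by rewrite (prod_upd_below (fun i => K i (x i)))//; lia.
have hk : minorized (K (q + m)%N (x (q + m)%N)) (nu (q + m)%N) by apply: K_minorized; lia.
have -> : (q.-1 + m.+1 = (q.-1 + m).+1)%N by lia.
rewrite /= (_ : (q.-1 + m).+1 = q + m)%N; last by lia.
under eq_Rintegral => w _.
  rewrite IH; last by lia.
  rewrite upd_same big_ltn; last by lia.
  rewrite (prod_upd_below (fun i => K i (x i))); last by lia.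
  rewrite upd_same upd_other ?mulrA; last by lia.
  over.
rewrite RintegralZr//; last first.
  apply/bmfun_integrable/(bmfun_forward_integrand hk)/unit_mfun_bmfun.
  by apply: forward_from_unit; [|lia|exact: unit_mfun1].
by rewrite addnS.
Qed.

Lemma probX_forward_from x q : (0 < q)%N -> (q <= n.+1)%N ->
  probX pi K n q x = \int[pi]_u forward_from x q (n.+1 - q) (fun _ => 1) u.
Proof.
move=> q0 qn; rewrite /probX /=; apply: eq_Rintegral => w _.
have qm : (q + (n.+1 - q) <= n.+1)%N by rewrite subnKC.
have nE : (q.-1 + (n.+1 - q) = n)%N by lia.
have := iint_forward_from x (upd (fun=> point) n.+1 w) q0 qm.
by rewrite nE subnKC// upd_same big_geq// mulr1.
Qed.

Lemma condP_forward_from z q : (0 < q)%N -> (q <= n)%N ->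
  condP pi K n q z =
  \int[pi]_u forward_from z q.+1 (n - q) (forward (K q (z q)) (fun _ => 1)) u /
  \int[pi]_u forward_from z q.+1 (n - q) (fun _ => 1) u.
Proof.
move=> q0 qn; rewrite /condP !probX_forward_from//; last by lia.
by rewrite subSS subSn// forward_fromS.
Qed.

Lemma condP_between z q a b : (0 < q)%N -> (q <= n)%N ->
  ratio_between (forward_from z q.+1 (n - q) (forward (K q (z q)) (fun _ => 1)))
                (forward_from z q.+1 (n - q) (fun _ => 1)) a b ->
  a <= condP pi K n q z <= b.
Proof.
move=> q0 qn hf; rewrite condP_forward_from//.
have hk : minorized (K q (z q)) (nu q) by apply: K_minorized; lia.
have um h : unit_mfun h -> unit_mfun (forward_from z q.+1 (n - q) h).
  by apply: forward_from_unit; lia.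
have /andP[aFH HbF] := Rintegral_ratio_between pi
  (unit_mfun_bmfun (um _ (forward_unit pi hk unit_mfun1)))
  (unit_mfun_bmfun (um _ unit_mfun1)) hf.
have F_gt0 : 0 < \int[pi]_u forward_from z q.+1 (n - q) (fun _ => 1) u.
  have nu_le u : \prod_(q.+1 <= i < q.+1 + (n - q)) nu i <=
      forward_from z q.+1 (n - q) (fun _ => 1) u.
    by apply: forward_from1_ge; lia.
  apply: lt_le_trans (Rintegral_ge_cst pi (unit_mfun_bmfun (um _ unit_mfun1)) nu_le).
  by rewrite big_seq prodr_gt0// => i; rewrite mem_index_iota => hi; apply: nu_gt0; lia.
by rewrite ler_pdivlMr// ler_pdivrMr// aFH HbF.
Qed.

Lemma condP_common_bounds x q qt xt : (0 < q)%N -> (q <= qt <= n)%N ->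
  exists a b, [/\ nu q <= a,
    b - a <= (1 - nu q) * \prod_(q.+1 <= k < qt) (1 - nu k),
    a <= condP pi K n q x <= b & a <= condP pi K n q (upd x qt xt) <= b].
Proof.
move=> q0 /andP[qqt qtn].
have hk z : minorized (K q (z q)) (nu q) by apply: K_minorized; lia.
pose g z := forward (K q (z q)) (fun _ => 1).
have ug z : unit_mfun (g z) := forward_unit pi (hk z) unit_mfun1.
have g_ratio z : ratio_between (g z) (fun _ => 1) (nu q) 1.
  move=> u; rewrite !mulr1; apply/andP; split; last by case/andP: ((ug z).2 u).
  by rewrite -[leLHS]mul1r; apply: (forward_ge_cst pi (hk z)) => //; exact: bmfun_cst.
have nuq1 : nu q <= 1 := minorized_le1 (hk x).
move: qqt; rewrite leq_eqVlt => /predU1P[qt_eq | q_lt].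
  exists (nu q), 1; rewrite -qt_eq big_geq// mulr1.
  have ratio z : ratio_between (forward_from z q.+1 (n - q) (g z))
      (forward_from z q.+1 (n - q) (fun _ => 1)) (nu q) 1.
    by apply: forward_from_ratio_between; [|lia|exact: ug|exact: unit_mfun1|].
  by split => //; apply: condP_between => //; lia.
pose m1 := (qt - q.+1)%N.
have nE : (n - q = m1 + (n.+1 - qt))%N by lia.
have sE : (q.+1 + m1 = qt)%N by lia.
have [a [b [nua _ ba hab]]] :=
  forward_from_contraction x q.+1 m1 (g x) (fun _ => 1) (nu q) 1 isT
    ltac:(lia) (ug x) unit_mfun1 nuq1 (g_ratio x).
have between z : (forall i, (q <= i < qt)%N -> z i = x i) ->
    a <= condP pi K n q z <= b.
  move=> zx; apply: condP_between => //; first by lia.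
  rewrite nE !forward_from_add sE.
  have zx1 i : (q.+1 <= i < q.+1 + m1)%N -> z i = x i by move=> hi; apply: zx; lia.
  rewrite -/(g z) (_ : g z = g x) ?(eq_forward_from _ _ _ _ _ zx1); last first.
    by rewrite /g zx//; lia.
  have uff h : unit_mfun h -> unit_mfun (forward_from x q.+1 m1 h).
    by apply: forward_from_unit; lia.
  apply: forward_from_ratio_between => //; try lia.
    exact/uff/ug.
  exact/uff/unit_mfun1.
exists a, b; split => //; first by rewrite -sE.
  exact: between.
by apply: between => i hi; rewrite upd_other//; apply/eqP; lia.
Qed.

End HiddenMarkov.

Theorem lemma8 (d : measure_display) (V : measurableType d) (R : realType)
  (X : choiceType) (n : nat) (pi : probability V R)
  (K : nat -> X -> V -> V -> R) (nu : nat -> R)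
  (K_meas : forall i (x : X), (1 <= i <= n)%N ->
     measurable_fun setT (fun vw : V * V => K i x vw.1 vw.2))
  (K_ge0 : forall i x v w, (1 <= i <= n)%N -> 0 <= K i x v w)
  (K_prob : forall i v w, (1 <= i <= n)%N ->
     (\esum_(x in [set: X]) (K i x v w)%:E = 1)%E)
  (nu_gt0 : forall i, (1 <= i <= n)%N -> 0 < nu i)
  (H2 : forall i x v w, (1 <= i <= n)%N -> nu i <= K i x v w <= 1)
  (q qt : nat) (hq : (1 <= q)%N) (hqqt : (q <= qt)%N) (hqtn : (qt <= n)%N)
  (x : nat -> X) (xt : X) :
  `| ln (condP pi K n q x) - ln (condP pi K n q (upd x qt xt)) |
    <= (nu q)^-1 * \prod_(q.+1 <= k < qt) (1 - nu k).
Proof.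
(* [K_ge0] follows from [H2] and [nu_gt0]. *)
have qqtn : (q <= qt <= n)%N by rewrite hqqt hqtn.
have [a [b [nua ba hx hy]]] :=
  condP_common_bounds pi K_meas nu_gt0 H2 x q qt xt hq qqtn.
set P := \prod_(q.+1 <= k < qt) (1 - nu k) in ba *.
have nuq : 0 < nu q by apply: nu_gt0; lia.
have P0 : 0 <= P.
  rewrite /P big_seq prodr_ge0// => k; rewrite mem_index_iota subr_ge0 => hk.
  by have /andP[/le_trans] := H2 k (x k) point point ltac:(lia); apply.
apply: le_trans (norm_lnB_le (lt_le_trans nuq nua) hx hy) _.
have ba0 : 0 <= b - a by case/andP: hx => /le_trans h /h; rewrite subr_ge0.
have ia : a^-1 <= (nu q)^-1 by rewrite lef_pV2 ?posrE// (lt_le_trans nuq).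
have iq0 : 0 <= (nu q)^-1 by rewrite invr_ge0 ltW.
have baP : b - a <= P by nra.
nra.
Qed.
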